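(* Let $G$ be a finite, simple, connected graph. If $G$ contains an isometric cycle $C$ of length $n\ge 3$, then $\sigma(G)\ge \lceil n/3\rceil$.
   Context: A cycle $C$ in $G$ is isometric if $d_C(u,v)=d_G(u,v)$ for all vertices $u,v$ of $C$, where $d_C$, $d_G$ are graph distances in $C$ and in $G$. The stretch of $G$ is $\sigma(G)=\min_T\max_{uv\in E(G)} d_T(u,v)$, the minimum over all spanning trees $T$ of $G$. *)

From mathcomp Require Import all_boot.
Set Implicit Arguments. Unset Strict Implicit. Unset Printing Implicit Defensive.

Section Graphs.
Variable T : finType.

Definition simple_graph (e : rel T) : Prop :=
  symmetric e /\ irreflexive e.

Definition connected_graph (e : rel T) : Prop :=
  forall x y : T, connect e x y.

Definition walk_of_len (e : rel T) (x y : T) (k : nat) : bool :=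
  [exists p : k.-tuple T, path e x p && (last x p == y)].

(* Graph distance: the least k such that there is an x-y walk of length k
   (equals #|T| if y is unreachable from x; a shortest walk in a graph has
   length < #|T|). *)
Definition dist (e : rel T) (x y : T) : nat :=
  find (walk_of_len e x y) (iota 0 #|T|).

Definition cycle_rel (c : seq T) : rel T :=
  fun x y => [&& x \in c, y \in c & (next c x == y) || (next c y == x)].

Definition is_cycle (e : rel T) (c : seq T) : bool :=
  [&& 3 <= size c, uniq c & cycle e c].

Definition isometric_cycle (e : rel T) (c : seq T) : Prop :=
  is_cycle e c /\
  forall u v, u \in c -> v \in c -> dist (cycle_rel c) u v = dist e u v.

Definition rel_of (t : {set T * T}) : rel T := fun x y => (x, y) \in t.

(* Acyclic: no cycle (distinct vertices, length >= 3); cycles in a graph on T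
   have length at most #|T|. *)
Definition acyclicb (r : rel T) : bool :=
  [forall k : 'I_#|T|.+1, forall c : k.-tuple T, ~~ is_cycle r c].

Definition spanning_tree (e : rel T) (t : {set T * T}) : bool :=
  [&& [forall p in t, e p.1 p.2],
      [forall p in t, (p.2, p.1) \in t],
      [forall x, forall y, connect (rel_of t) x y] &
      acyclicb (rel_of t)].

(* Stretch: min over spanning trees of the max over edges uv of d_T(u,v).
   (Default #|T| if no spanning tree exists, which never happens for
   connected graphs.) *)
Definition stretch (e : rel T) : nat :=
  \big[minn/#|T|]_(t : {set T * T} | spanning_tree e t)
     \max_(p : T * T | e p.1 p.2) dist (rel_of t) p.1 p.2.

End Graphs.

(* Let t be a spanning tree of G with every edge uv of G at t-distance <= k,
   and let c be an isometric cycle of G of length n; we show n <= 3k, which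
   gives ceil(n/3) <= sigma(G).  Suppose n > 3k.
   - If k <= 1, t contains every edge of G, hence the cycle c: impossible.
   - Otherwise take a centroid w of t with respect to the vertex set of c:
     no branch of t at w (component of t - w) holds more than n/2 vertices of
     c.  An edge of c whose ends are separated by w has, since the t-path
     between its ends runs through w, an end at G-distance <= k/2 from w.
     As c is isometric, all such ends lie on an arc of c of length <= k, so
     n - k - 2 consecutive edges of c are not separated and their vertices
     lie in a single branch at w, which is then heavy: a contradiction. *)

From mathcomp Require Import all_boot zify.

Set Implicit Arguments. Unset Strict Implicit. Unset Printing Implicit Defensive.

Section Distance.
Variable T : finType.
Implicit Types (r : rel T) (x y z : T) (p : seq T).

Lemma walk_of_lenP r x y k :
  reflect (exists p, [/\ size p = k, path r x p & last x p = y])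
          (walk_of_len r x y k).
Proof.
apply: (iffP existsP) => [[p /andP[rp /eqP lp]] | [p [sp rp lp]]].
  by exists (val p); rewrite size_tuple.
have sp' : size p == k by rewrite sp.
by exists (Tuple sp'); rewrite /= rp lp eqxx.
Qed.

Lemma dist_le_card r x y : dist r x y <= #|T|.
Proof. by rewrite -[#|T|](size_iota 0); apply: find_size. Qed.

Lemma dist_le_walk r x y p : path r x p -> last x p = y -> dist r x y <= size p.
Proof.
move=> rp lp; have [sp|] := ltnP (size p) #|T|; last exact: leq_trans (dist_le_card _ _ _).
rewrite leqNgt; apply/negP => lt_dist.
have := before_find 0 lt_dist; rewrite nth_iota // add0n.
by move/negbT/negP; apply; apply/walk_of_lenP; exists p.
Qed.

Lemma dist_walk_lt r x y : dist r x y < #|T| ->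
  exists p, [/\ size p = dist r x y, path r x p & last x p = y].
Proof.
move=> lt_dist; have has_walk : has (walk_of_len r x y) (iota 0 #|T|).
  by rewrite has_find size_iota.
by have := nth_find 0 has_walk; rewrite nth_iota // add0n => /walk_of_lenP.
Qed.

(* Between connected vertices the distance is finite (a shortest walk is a path). *)
Lemma dist_connect_lt r x y : connect r x y -> dist r x y < #|T|.
Proof.
case/connectP=> p rp ->; case/shortenP: rp => p' rp' up' _.
apply: leq_ltn_trans (dist_le_walk rp' erefl) _.
by have := max_card (mem (x :: p')); rewrite (card_uniqP up').
Qed.

Lemma dist_walk r x y : connect r x y ->
  exists p, [/\ size p = dist r x y, path r x p & last x p = y].
Proof. by move=> /dist_connect_lt; apply: dist_walk_lt. Qed.

Lemma dist_triangle r x y z : connect r x y -> connect r y z ->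
  dist r x z <= dist r x y + dist r y z.
Proof.
move=> /dist_walk [p [<- rp lp]] /dist_walk [q [<- rq lq]].
rewrite -size_cat; apply: dist_le_walk; first by rewrite cat_path rp lp rq.
by rewrite last_cat lp.
Qed.

Lemma dist_subrel r r' x y : subrel r r' -> connect r x y -> dist r' x y <= dist r x y.
Proof. by move=> sub_rr' /dist_walk [p [<- rp lp]]; exact: dist_le_walk (sub_path sub_rr' rp) lp. Qed.

Lemma dist_refl r x : dist r x x = 0.
Proof. by apply/eqP; rewrite -leqn0; apply: (@dist_le_walk r x x [::]). Qed.

Lemma dist_sym_le r x y : symmetric r -> connect r x y -> dist r y x <= dist r x y.
Proof.
move=> sym_r /dist_walk [p [<- rp lp]].
have rp' : path r y (rev (belast x p)).
  by rewrite -lp rev_path; apply: sub_path rp => a b; rewrite sym_r.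
rewrite -(size_belast x p) -size_rev; apply: dist_le_walk rp' _.
by rewrite -lp; case: p {rp lp} => //= a p; rewrite rev_cons last_rcons.
Qed.

Lemma dist_sym r x y : symmetric r -> connect r x y -> dist r x y = dist r y x.
Proof.
move=> sym_r cxy; apply/eqP; rewrite eqn_leq (dist_sym_le sym_r cxy) andbT.
by apply: dist_sym_le; rewrite // (sym_connect_sym sym_r).
Qed.

Lemma dist_via r w x y : symmetric r -> (forall u v, connect r u v) ->
  dist r x y <= dist r x w + dist r y w.
Proof.
move=> sym_r conn_r; rewrite (dist_sym sym_r (conn_r y w)).
exact: dist_triangle.
Qed.
End Distance.

Section CyclicPositions.
Variables (T : finType) (c : seq T) (x0 : T).
Hypothesis c_uniq : uniq c.
Hypothesis c_pos : 0 < size c.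
Local Notation n := (size c).

Definition cvert m := nth x0 c (m %% n).

Lemma cvert_eq a b : (cvert a == cvert b) = (a %% n == b %% n).
Proof. by rewrite /cvert nth_uniq // ltn_pmod. Qed.

Lemma cvertD a b d : cvert a = cvert b -> cvert (a + d) = cvert (b + d).
Proof. by move/eqP; rewrite cvert_eq => /eqP ab; apply/eqP; rewrite cvert_eq -modnDml ab modnDml. Qed.

Lemma cvertK a b d : cvert (a + d) = cvert (b + d) -> cvert a = cvert b.
Proof. by move/eqP; rewrite cvert_eq eqn_modDr -cvert_eq => /eqP. Qed.

Lemma cvert_mem m : cvert m \in c.
Proof. by rewrite /cvert mem_nth // ltn_pmod. Qed.

Lemma cvert_index x : x \in c -> cvert (index x c) = x.
Proof. by move=> cx; rewrite /cvert modn_small ?index_mem // nth_index. Qed.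

Lemma next_cvert m : next c (cvert m) = cvert m.+1.
Proof.
rewrite /cvert; case: c c_uniq c_pos => [//|y s] uniq_ys _.
have lt_q : m %% (size s).+1 < (size s).+1 by rewrite ltn_pmod.
rewrite next_nth mem_nth // index_uniq //= -[m.+1]addn1 -modnDml addn1.
move: lt_q; set q := m %% _ => lt_q.
have [lt_qs | ] := ltnP q.+1 (size s).+1.
  by rewrite (modn_small lt_qs) /=; apply: set_nth_default.
move=> le_sq; have -> : q = size s by lia.
by rewrite modnn /= nth_default.
Qed.

Lemma cycle_rel_step y z j : y = cvert j -> cycle_rel c y z ->
  z = cvert (j + 1) \/ exists j', z = cvert j' /\ cvert (j' + 1) = cvert j.
Proof.
move=> -> /and3P [_ cz /orP [/eqP <- | /eqP nz]]; first by left; rewrite next_cvert addn1.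
by right; exists (index z c); rewrite cvert_index // addn1 -next_cvert cvert_index.
Qed.

Lemma cycle_walk_offset i p : path (cycle_rel c) (cvert i) p ->
  exists j d, [/\ last (cvert i) p = cvert j, d <= size p &
                  cvert (j + d) = cvert i \/ cvert (i + d) = cvert j].
Proof.
elim/last_ind: p => [|p z IH].
  by move=> _; exists i, 0; rewrite addn0; split=> //; left.
rewrite rcons_path last_rcons size_rcons => /andP [/IH [j [d [lj le_d off]]] step].
have [-> | [j' [-> back]]] := cycle_rel_step lj step; [exists (j + 1) | exists j'].
  case: off => [fwd | bwd].
    case: d le_d fwd => [|d] le_d fwd.
      by exists 1; split=> //; right; rewrite addn0 in fwd; exact: cvertD.
    by exists d; split; [ | lia | left; rewrite -fwd; congr cvert; lia].
  by exists d.+1; split; [ | lia | right; rewrite addnS -addn1 (cvertD 1 bwd)].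
case: off => [fwd | bwd].
  by exists d.+1; split; [ | lia | left; rewrite -fwd -(cvertD d back); congr cvert; lia].
case: d le_d bwd => [|d] le_d bwd.
  by exists 1; split=> //; left; rewrite back -bwd addn0.
by exists d; split; [ | lia | right; apply: (@cvertK _ _ 1); rewrite back -bwd; congr cvert; lia].
Qed.

Lemma cycle_dist_lb i o : o < n ->
  minn o (n - o) <= dist (cycle_rel c) (cvert i) (cvert (i + o)).
Proof.
move=> lt_on.
have [lt_dist | ] := ltnP (dist (cycle_rel c) (cvert i) (cvert (i + o))) #|T|; last first.
  move=> le_card; apply: leq_trans (geq_minr _ _) _; apply: leq_trans (leq_subr o n) _.
  by apply: leq_trans le_card; rewrite -(card_uniqP c_uniq) max_card.
have [p [<- cp lp]] := dist_walk_lt lt_dist.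
have [j [d [lj le_d [fwd | bwd]]]] := cycle_walk_offset cp; rewrite lp in lj;
  apply: leq_trans le_d.
  have : cvert (i + (o + d)) = cvert (i + 0) by rewrite addn0 addnA (cvertD d lj) fwd.
  move/eqP; rewrite cvert_eq eqn_modDl mod0n => /eqP od_mod.
  have [lt_odn | ] := ltnP (o + d) n; last by lia.
  by rewrite modn_small in od_mod; lia.
have : cvert (i + d) = cvert (i + o) by rewrite bwd lj.
move/eqP; rewrite cvert_eq eqn_modDl (modn_small lt_on) => /eqP d_mod.
by have := leq_mod d n; rewrite d_mod; lia.
Qed.
End CyclicPositions.

Section Trees.
Variable T : finType.

Lemma acyclic_no_cycle (r : rel T) (s : seq T) : acyclicb r -> ~~ is_cycle r s.
Proof.
move=> /forallP acyc; apply/negP => cyc_s.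
have lt_s : size s < #|T|.+1.
  by case/and3P: cyc_s => _ uniq_s _; rewrite ltnS -(card_uniqP uniq_s) max_card.
by move/forallP: (acyc (Ordinal lt_s)) => /(_ (in_tuple s)); rewrite cyc_s.
Qed.

Variable t : rel T.
Hypothesis t_irr : irreflexive t.
Hypothesis t_sym : symmetric t.
Hypothesis t_conn : forall x y, connect t x y.
Hypothesis t_acyc : acyclicb t.

Definition avoid w := [rel x y | t x y && (x != w) && (y != w)].

Lemma dist_through_cut w x y : x != w -> ~~ connect (avoid w) x y ->
  dist t x w + dist t w y <= dist t x y.
Proof.
move=> xw not_xy; have [p [<- tp lp]] := dist_walk (t_conn x y).
have [wp | wNp] := boolP (w \in p); last first.
  case/negP: not_xy; apply/connectP; exists p => //.
  apply: (@sub_in_path _ (predC1 w)) tp; last first.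
    by rewrite /= xw; apply/allP => z zp /=; apply: contraNneq wNp => <-.
  by move=> a b + + tab; rewrite /= tab !unfold_in /= => -> ->.
move: tp lp; case/splitPr: wp => p1 p2.
rewrite cat_path last_cat /= size_cat /= addnS -addSn => /and3P [tp1 tw tp2] lp2.
apply: leq_add; last exact: dist_le_walk tp2 lp2.
by rewrite -(size_rcons p1 w); apply: dist_le_walk; rewrite ?rcons_path ?tp1 ?last_rcons.
Qed.

Lemma avoid_sym w : symmetric (avoid w).
Proof. by move=> x y; rewrite /= t_sym andbAC. Qed.

Lemma connect_avoid_sym w x y : connect (avoid w) x y = connect (avoid w) y x.
Proof. exact: (sym_connect_sym (@avoid_sym w)). Qed.

Lemma connect_avoid_to w x : connect (avoid w) x w -> x = w.
Proof.
rewrite connect_avoid_sym => /connectP [[|z p] //= /andP [twz _] ->].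
by move: twz; rewrite eqxx andbF.
Qed.

Lemma avoid_switch w w' x y :
  connect (avoid w') x y -> ~~ connect (avoid w') x w -> connect (avoid w) x y.
Proof.
case/connectP => p tp -> xNw; apply/connectP; exists p => //.
have reach : all [pred z | connect (avoid w') x z] (x :: p).
  by apply/allP => z zp; apply: path_connect tp _ zp.
apply: (@sub_in_path _ [pred z | connect (avoid w') x z]) reach tp.
move=> a b /= xa xb /andP [/andP [tab _] _]; rewrite /= tab /=.
by apply/andP; split; apply: contraNneq xNw => <-.
Qed.

Lemma neighbour_towards w a : a != w -> exists2 w', t w' w & connect (avoid w) a w'.
Proof.
move=> aw; case/connectP: (t_conn a w) => p.
elim: p a aw => [|y p IH] a aw /=; first by move=> _ aw'; rewrite aw' eqxx in aw.
case/andP => tay tp lp; have [yw | yNw] := eqVneq y w.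
  by exists a; rewrite -?yw ?connect0.
have [w' tw' yw'] := IH y yNw tp lp.
by exists w' => //; apply: connect_trans yw'; apply: connect1; rewrite /= tay aw yNw.
Qed.

Definition cut u v := [rel x y | t x y && ~~ (((x == u) && (y == v)) || ((x == v) && (y == u)))].

Lemma edge_is_bridge u v : t u v -> ~~ connect (cut u v) u v.
Proof.
move=> tuv; apply/negP => /connectP [p cp lp].
have uv : u != v by apply: contraTneq tuv => ->; rewrite t_irr.
case/shortenP: cp lp => p' cp' uniq_p' _ lp'.
have tp' : path t u p' by apply: sub_path cp' => x y /andP [].
case: p' cp' uniq_p' lp' tp' => [|y [|z q]] cp' uniq_p' lp' tp'.
- by rewrite /= in lp'; rewrite lp' eqxx in uv.
- by move: cp'; rewrite /= in lp' *; rewrite lp' !eqxx /= andbF.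
have /negP[] := acyclic_no_cycle [:: u, y, z & q] t_acyc.
rewrite /is_cycle uniq_p'.
have -> : cycle t [:: u, y, z & q] = path t u (rcons [:: y, z & q] u) by [].
by rewrite rcons_path tp' -lp' t_sym tuv.
Qed.

Lemma avoid_sub_cut u v w : w \in [:: u; v] -> subrel (avoid w) (cut u v).
Proof.
move=> wuv x y /andP [/andP [txy xw] yw]; rewrite /= txy /=.
apply/negP => /orP [] /andP [/eqP ex /eqP ey]; subst x y;
  by rewrite !inE !(eq_sym w) (negbTE xw) (negbTE yw) in wuv.
Qed.

Lemma no_detour w w' b : t w' w ->
  connect (avoid w) w' b -> connect (avoid w') b w -> False.
Proof.
move=> tw'w w'b bw; apply: (negP (edge_is_bridge tw'w)).
have sub_cut u : u \in [:: w'; w] -> subrel (connect (avoid u)) (connect (cut w' w)).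
  by move=> uw; apply: connect_sub => x y /(avoid_sub_cut uw)/connect1.
by apply: connect_trans (sub_cut w _ _ _ w'b) (sub_cut w' _ _ _ bw); rewrite !inE eqxx ?orbT.
Qed.

Variable W : {set T}.

(* The branch of t at w containing a: the component of a in t - w
   (empty when a = w). *)
Definition branch w a : {set T} := [set v | (v != w) && connect (avoid w) a v].

Definition heavy w a := #|W| < 2 * #|W :&: branch w a|.

Lemma heavy_neq w a : heavy w a -> a != w.
Proof.
apply: contraTneq => ->; rewrite /heavy -leqNgt.
suff -> : branch w w = set0 by rewrite setI0 cards0.
apply/setP => v; rewrite !inE; apply/negP => /andP [vw].
by rewrite connect_avoid_sym => /connect_avoid_to /eqP; rewrite (negbTE vw).
Qed.

Lemma heavy_meet w a w' a' : heavy w a -> heavy w' a' ->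
  exists b, b \in (W :&: branch w a) :&: (W :&: branch w' a').
Proof.
rewrite /heavy => hwa hw'a'.
have le_W : #|(W :&: branch w a) :|: (W :&: branch w' a')| <= #|W|.
  by apply: subset_leq_card; rewrite subUset !subsetIl.
have UI := cardsUI (W :&: branch w a) (W :&: branch w' a').
have : 0 < #|(W :&: branch w a) :&: (W :&: branch w' a')| by lia.
by rewrite card_gt0 => /set0Pn.
Qed.

Lemma heavy_shrink w a w' a' : heavy w a -> t w' w -> connect (avoid w) a w' ->
  heavy w' a' -> branch w' a' \proper branch w a.
Proof.
move=> hwa tw'w aw' hw'a'.
have [b] := heavy_meet hwa hw'a'.
rewrite !inE => /andP [/and3P [_ _ ab] /and3P [_ _ a'b]].
have a'Nw : ~~ connect (avoid w') a' w.
  apply/negP => a'w; apply: (@no_detour w w' b tw'w).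
    by apply: connect_trans ab; rewrite connect_avoid_sym.
  by apply: connect_trans a'w; rewrite connect_avoid_sym.
have aa' : connect (avoid w) a a'.
  by apply: connect_trans ab _; rewrite connect_avoid_sym (avoid_switch a'b a'Nw).
apply/properP; split.
  apply/subsetP => v; rewrite !inE => /andP [_ a'v].
  rewrite (connect_trans aa' (avoid_switch a'v a'Nw)) andbT.
  by apply: contraNneq a'Nw => <-.
exists w'; rewrite !inE ?eqxx // aw' andbT.
by apply: contraTneq tw'w => ->; rewrite t_irr.
Qed.

Lemma centroid_exists (x0 : T) : exists w, forall a, ~~ heavy w a.
Proof.
have [/existsP [w /forallP] | /existsPn all_heavy] :=
  boolP [exists w, [forall a, ~~ heavy w a]]; first by exists w.
(* Otherwise, stepping from w towards a heavy branch at w reaches a vertex whose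
   heavy branch is strictly smaller: an infinite descent. *)
suff descent N w a : heavy w a -> #|branch w a| <= N -> False.
  by have /forallPn [a /negPn hx0a] := all_heavy x0; case: (descent _ _ _ hx0a (leqnn _)).
elim: N w a => [|N IH] w a hwa.
  by rewrite leqn0 => /eqP /cards0_eq branch0; rewrite /heavy branch0 setI0 cards0 in hwa.
move=> small; have [w' tw'w aw'] := neighbour_towards (heavy_neq hwa).
have /forallPn [a' /negPn hw'a'] := all_heavy w'.
apply: (IH w' a' hw'a'); rewrite -ltnS.
exact: leq_trans (proper_card (heavy_shrink hwa tw'w aw' hw'a')) small.
Qed.
End Trees.

Lemma short_arc n k (P : pred nat) : 3 * k < n -> P 0 ->
  (forall o1 o2, o1 <= o2 < n -> P o1 -> P o2 -> minn (o2 - o1) (n - (o2 - o1)) <= k) ->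
  exists hi lo, hi + lo <= k /\ forall o, o < n -> P o -> o <= hi \/ n - lo <= o.
Proof.
move=> large P0 close.
have near0 o : o < n -> P o -> (o <= k) || (n - k <= o).
  by move=> lt_on Po; have := close 0 o lt_on P0 Po; lia.
have across o1 o2 : o1 < n -> P o1 -> n - k <= o1 -> P o2 -> o2 <= k -> n - o1 + o2 <= k.
  move=> lt_o1n Po1 high Po2 low.
  have le_o21 : o2 <= o1 < n by lia.
  by have := close o2 o1 le_o21 Po2 Po1; lia.
pose hi := \max_(o < n | P o && (o <= k)) o.
pose lo := \max_(o < n | P o && (n - k <= o)) (n - o).
have hi_lo_high (o1 : 'I_n) : P o1 && (n - k <= o1) -> hi + (n - o1) <= k.
  move=> /andP [Po1 high].
  suff : hi <= k - (n - o1) by lia.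
  apply/bigmax_leqP => o2 /andP [Po2 low].
  by have := across o1 o2 (ltn_ord o1) Po1 high Po2 low; lia.
exists hi, lo; split.
  have le_hik : hi <= k by apply/bigmax_leqP => o /andP [].
  suff : lo <= k - hi by lia.
  by apply/bigmax_leqP => o1 /hi_lo_high; lia.
move=> o lt_on Po; have /orP [low | high] := near0 o lt_on Po.
  by left; apply: (@leq_bigmax_cond _ _ (fun o : 'I_n => nat_of_ord o) (Ordinal lt_on)); rewrite /= Po.
right; suff : n - o <= lo by lia.
by apply: (@leq_bigmax_cond _ _ (fun o : 'I_n => n - o) (Ordinal lt_on)); rewrite /= Po.
Qed.

Section IsometricCycle.
Variables (T : finType) (e : rel T) (c : seq T) (x0 : T).
Hypothesis e_sym : symmetric e.
Hypothesis e_irr : irreflexive e.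
Hypothesis e_conn : connected_graph e.
Hypothesis c_cycle : is_cycle e c.
Hypothesis c_iso : forall u v, u \in c -> v \in c -> dist (cycle_rel c) u v = dist e u v.
Variable t : rel T.
Hypothesis t_sub : subrel t e.
Hypothesis t_sym : symmetric t.
Hypothesis t_conn : forall x y, connect t x y.
Hypothesis t_acyc : acyclicb t.
Variable k : nat.
Hypothesis t_stretch : forall x y, e x y -> dist t x y <= k.

Local Notation n := (size c).
Local Notation cvert := (cvert c x0).
Local Notation W := [set v | v \in c].

Let c_uniq : uniq c. Proof. by case/and3P: c_cycle. Qed.
Let c_pos : 0 < n. Proof. by case/and3P: c_cycle => /ltnW/ltnW. Qed.
Let t_irr : irreflexive t. Proof. by move=> x; apply/negP => /t_sub; rewrite e_irr. Qed.

Lemma cycle_edge m : e (cvert m) (cvert (m + 1)).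
Proof.
case/and3P: c_cycle => _ _ cyc.
by rewrite addn1 -(next_cvert x0 c_uniq c_pos); apply: next_cycle cyc (cvert_mem x0 c_pos m).
Qed.

(* Isometry of c turns the cycle-distance bound into a bound in G. *)
Lemma graph_dist_lb i o : o < n -> minn o (n - o) <= dist e (cvert i) (cvert (i + o)).
Proof. by move=> lt_on; rewrite -c_iso ?(cvert_mem x0 c_pos) ?(cycle_dist_lb x0 c_uniq c_pos). Qed.

Lemma dist_graph_le_tree x y : dist e x y <= dist t x y.
Proof. exact: dist_subrel t_sub (t_conn x y). Qed.

Lemma edges_in_tree : k <= 1 -> subrel e t.
Proof.
move=> le_k1 x y exy; have := leq_trans (t_stretch exy) le_k1.
have [p [<- tp lp]] := dist_walk (t_conn x y).
case: p tp lp => [|z [|z' q]] //= tp lp _; first by rewrite -lp e_irr in exy.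
by move: tp; rewrite -lp andbT.
Qed.

Definition separated w j :=
  [|| cvert j == w, cvert (j + 1) == w | ~~ connect (avoid t w) (cvert j) (cvert (j + 1))].

(* A separated edge has an end within G-distance k/2 of w: the t-path between
   its ends has length <= k and passes through w. *)
Lemma separated_near w j : separated w j ->
  exists2 b, b <= 1 & 2 * dist e (cvert (j + b)) w <= k.
Proof.
have [jw _ | jNw] := eqVneq (cvert j) w; first by exists 0; rewrite ?addn0 ?jw ?dist_refl.
have [j1w _ | j1Nw] := eqVneq (cvert (j + 1)) w; first by exists 1; rewrite ?j1w ?dist_refl.
rewrite /separated (negbTE jNw) (negbTE j1Nw) /= => apart.
have := dist_through_cut t_conn jNw apart.
have := t_stretch (cycle_edge j); have := dist_graph_le_tree (cvert j) w.
have := dist_graph_le_tree (cvert (j + 1)) w; rewrite [dist t (cvert _) w]dist_sym //.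
have [le_j | lt_j1] := leqP (dist t (cvert j) w) (dist t w (cvert (j + 1))).
  by exists 0; rewrite ?addn0 //; lia.
by exists 1 => //; lia.
Qed.

Lemma near_close w x y : 2 * dist e x w <= k -> 2 * dist e y w <= k -> dist e x y <= k.
Proof. by have := dist_via w x y e_sym e_conn; lia. Qed.

Lemma unseparated_run w b L : 0 < L < n ->
  (forall m, m < L -> ~~ separated w (b + m)) -> L < #|W :&: branch t w (cvert b)|.
Proof.
move=> /andP [L_pos lt_Ln] unsep.
have ends m : m < L -> [&& cvert (b + m) != w, cvert (b + m + 1) != w &
    connect (avoid t w) (cvert (b + m)) (cvert (b + m + 1))].
  by move=> /unsep; rewrite /separated !negb_or negbK.
have not_w m : m <= L -> cvert (b + m) != w.
  rewrite leq_eqVlt => /orP [/eqP -> | /ends /and3P [] //].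
  have lt_L : L.-1 < L by lia.
  by have /ends /and3P [_ + _] := lt_L; rewrite -addnA addn1 prednK.
have reach m : m <= L -> connect (avoid t w) (cvert b) (cvert (b + m)).
  elim: m => [|m IH] le_mL; first by rewrite addn0 connect0.
  apply: connect_trans (IH (ltnW le_mL)) _.
  by have /ends /and3P [_ _] := le_mL; rewrite -addnA addn1.
pose s := [seq cvert (b + m) | m <- iota 0 L.+1].
have uniq_s : uniq s.
  rewrite map_inj_in_uniq ?iota_uniq // => m1 m2; rewrite !mem_iota !add0n => lt_m1 lt_m2.
  move/eqP; rewrite (cvert_eq x0 c_uniq c_pos) eqn_modDl !modn_small ?(leq_trans lt_m1, leq_trans lt_m2) //.
  by move/eqP.
have sub_s : s \subset W :&: branch t w (cvert b).
  apply/subsetP => v /mapP [m]; rewrite mem_iota add0n ltnS => le_mL ->.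
  by rewrite !inE (cvert_mem x0 c_pos) not_w ?reach.
by have := subset_leq_card sub_s; rewrite (card_uniqP uniq_s) size_map size_iota.
Qed.

(* Suppose n > 3k. The separated edges of c all lie in an arc of length about k,
   so some n - k - 2 consecutive edges of c are unseparated by w. *)
Lemma long_unseparated_run w : 3 * k < n ->
  exists b, forall m, m < n - k - 2 -> ~~ separated w (b + m).
Proof.
move=> large.
have [/existsP [m0 sep0] | /existsPn no_sep] := boolP [exists m : 'I_n, separated w m];
  last first.
  exists 0 => m lt_m; have lt_mn : m < n by lia.
  by rewrite add0n (no_sep (Ordinal lt_mn)).
have [b0 _ near0] := separated_near sep0; set p0 := m0 + b0 in near0.
pose P o := 2 * dist e (cvert (p0 + o)) w <= k.
have [hi [lo [le_k cover]]] : exists hi lo, hi + lo <= k /\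
    forall o, o < n -> P o -> o <= hi \/ n - lo <= o.
  apply: short_arc large _ _ => [|o1 o2 /andP [le_o12 lt_o2n] Po1 Po2]; first by rewrite /P addn0.
  have lt_o12n : o2 - o1 < n by lia.
  apply: leq_trans (graph_dist_lb (p0 + o1) lt_o12n) _.
  by rewrite -addnA subnKC //; apply: near_close Po1 Po2.
exists (p0 + hi + 1) => m lt_m; apply/negP => /separated_near [b le_b near_m].
have P_m : P (hi + 1 + m + b) by rewrite /P !addnA.
have lt_n : hi + 1 + m + b < n by lia.
by have := cover _ lt_n P_m; lia.
Qed.

Lemma heavy_everywhere w : 2 <= k -> 3 * k < n -> exists a, heavy t W w a.
Proof.
move=> k_ge2 large; have [b unsep] := long_unseparated_run w large.
have L_range : 0 < n - k - 2 < n by lia.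
have card_W : #|W| = n by rewrite cardsE (card_uniqP c_uniq).
by exists (cvert b); rewrite /heavy card_W; have := unseparated_run L_range unsep; lia.
Qed.

Lemma isometric_cycle_short : n <= 3 * k.
Proof.
rewrite leqNgt; apply/negP => large.
have [le_k1 | lt_1k] := leqP k 1.
  have /negP [] := acyclic_no_cycle c t_acyc.
  case/and3P: c_cycle => size_c _ cyc.
  by rewrite /is_cycle size_c c_uniq (sub_cycle (edges_in_tree le_k1) cyc).
have [w no_heavy] := centroid_exists t_irr t_sym t_conn t_acyc W x0.
by have [a] := heavy_everywhere w lt_1k large; rewrite (negbTE (no_heavy a)).
Qed.
End IsometricCycle.

Lemma spanning_treeP (T : finType) (e : rel T) (t : {set T * T}) : spanning_tree e t ->
  [/\ subrel (rel_of t) e, symmetric (rel_of t),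
      forall x y, connect (rel_of t) x y & acyclicb (rel_of t)].
Proof.
case/and4P => /forallP t_sub /forallP t_sym /forallP t_conn t_acyc; split=> //.
- by move=> x y txy; apply: implyP (t_sub (x, y)) txy.
- by move=> x y; apply/idP/idP => txy; [apply: implyP (t_sym (x, y)) _ | apply: implyP (t_sym (y, x)) _].
- by move=> x; apply/forallP.
Qed.

Theorem mainTheorem2 (T : finType) (e : rel T) (c : seq T) :
  simple_graph e -> connected_graph e ->
  isometric_cycle e c ->
  (size c + 2) %/ 3 <= stretch e.
Proof.
move=> [e_sym e_irr] e_conn [c_cycle c_iso].
have x0 : T by move: c_cycle; case: (c) => [|x s] //; exact: x.
have c_small : size c <= #|T|.
  by case/and3P: c_cycle => _ c_uniq _; rewrite -(card_uniqP c_uniq) max_card.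
rewrite /stretch; apply: (big_ind (fun m => (size c + 2) %/ 3 <= m)).
- by apply: leq_trans c_small; lia.
- by move=> m1 m2; rewrite leq_min => -> ->.
move=> t /spanning_treeP [t_sub t_sym t_conn t_acyc].
set k := \max_(p | e p.1 p.2) dist (rel_of t) p.1 p.2.
have t_stretch x y : e x y -> dist (rel_of t) x y <= k.
  exact: (@leq_bigmax_cond _ (fun p : T * T => e p.1 p.2) (fun p => dist (rel_of t) p.1 p.2) (x, y)).
have := isometric_cycle_short x0 e_sym e_irr e_conn c_cycle c_iso t_sub t_sym t_conn t_acyc t_stretch.
lia.
Qed.
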